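(* ${\rm ML}^{\rm W}(K_3)=3$, and ${\rm ML}^{\rm W}(K_n)=\frac{n^2-5n+10}{2}$ for every $n \geq 4$.
   Context: $K_n$ is the complete graph on $n$ vertices. A walk of a graph $G$ is a sequence of vertices $u_0u_1\dots u_p$ with $u_tu_{t+1}\in E(G)$ for all $t$ (vertices and edges may repeat); its length is $p$. For a walk $W$ of $G$, $G+W$ is the multigraph on $V(G)$ whose edge multiset consists of $E(G)$ together with each edge added as many times as $W$ traverses it. A multigraph is locally irregular if no two adjacent vertices have the same degree; a walk is irregularising if $G+W$ is locally irregular. ${\rm ML}^{\rm W}(G)$ denotes the minimum length of an irregularising walk of $G$ (a walk of length $0$ is allowed). *)

From mathcomp Require Import all_boot.
Set Implicit Arguments. Unset Strict Implicit. Unset Printing Implicit Defensive.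

(* A simple graph on a finite vertex type T: a symmetric irreflexive relation. *)
Definition K (n : nat) : rel 'I_n := fun i j => i != j.
Arguments K n : clear implicits.

Section Walks.
Variables (T : finType) (e : rel T).

(* A walk u_0 u_1 ... u_p is represented by its start x = u_0 and the
   sequence s = [:: u_1; ...; u_p]; it is a walk iff path e x s.
   Its length is size s (a walk of length 0 is a single vertex). *)
Definition is_walk (x : T) (s : seq T) : bool := path e x s.

(* Degree of v in the multigraph G + W: degree of v in G, plus the number of
   walk steps u_t u_(t+1) (edge traversals) incident to v. Since G has no
   loops, each traversal of an edge incident to v contributes exactly 1. *)
Definition deg_plus_walk (x : T) (s : seq T) (v : T) : nat :=
  #|[set u | e v u]| +
  count (fun p : T * T => (p.1 == v) || (p.2 == v)) (zip (x :: s) s).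

(* G + W locally irregular: adjacent vertices have distinct degrees.
   (Adjacency in G + W coincides with adjacency in G, as W only uses
   edges of G.) *)
Definition irregularising (x : T) (s : seq T) : Prop :=
  is_walk x s /\
  forall u v : T, e u v -> deg_plus_walk x s u <> deg_plus_walk x s v.

Definition MLW_is (L : nat) : Prop :=
  (exists (x : T) (s : seq T), irregularising x s /\ size s = L) /\
  (forall (x : T) (s : seq T), irregularising x s -> L <= size s).

End Walks.

(* In K_n every vertex has degree n - 1, so a walk irregularises K_n exactly when
   the numbers c(v) of its steps incident to the vertices v are pairwise distinct.
   These numbers sum to twice the length of the walk, and they are even except at
   the two ends of the walk, so at best they are 0, 2, ..., 2(n - 3) together with
   1 and 3: twice the length is at least n^2 - 5n + 10 when n >= 4.  The bound is
   attained by the walk 1, 2, then the descending runs n-1, ..., a for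
   a = 3, ..., n - 1, then 2 again: vertex w >= 3 meets 2(w - 2) steps, vertex 2
   meets 3, vertex 1 meets 1 and vertex 0 none.  For K_3 the counting only gives
   length 2, and the walks of length at most 2 are excluded by inspection. *)

From mathcomp Require Import all_boot zify.
Set Implicit Arguments. Unset Strict Implicit. Unset Printing Implicit Defensive.

Section StepsAt.
Variable T : eqType.
Implicit Types (x v : T) (s : seq T).

Definition steps_at x s v : nat :=
  count (fun p : T * T => (p.1 == v) || (p.2 == v)) (zip (x :: s) s).

Lemma steps_at_cons x y s v :
  steps_at x (y :: s) v = ((x == v) || (y == v)) + steps_at y s v.
Proof. by []. Qed.

Lemma steps_at_last x s v : path (fun a b => a != b) x s ->
  steps_at x s v + (last x s == v) = (count_mem v s).*2 + (x == v).
Proof.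
elim: s x => [|y s IHs] x /=; first by rewrite addnC.
move=> /andP [xy ys]; rewrite steps_at_cons -addnA IHs // doubleD.
have : ~~ ((x == v) && (y == v)) by apply: contra xy => /andP [/eqP -> /eqP ->].
by case: (x == v); case: (y == v) => //= _; lia.
Qed.

Lemma odd_steps_at x s v : path (fun a b => a != b) x s ->
  odd (steps_at x s v) -> (v == x) || (v == last x s).
Proof.
move=> /(steps_at_last v); rewrite !(eq_sym v).
by case: (x == v); case: (last x s == v) => //= /(congr1 odd); rewrite !addn0 odd_double => ->.
Qed.

End StepsAt.

Section StepsAtFinite.
Variable T : finType.
Implicit Types (x v : T) (s : seq T).

Lemma sum_steps_at x s : path (fun a b => a != b) x s ->
  \sum_v steps_at x s v = (size s).*2.
Proof.
elim: s x => [|y s IHs] x /=; first by rewrite big1.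
move=> /andP [xy ys]; under eq_bigr do rewrite steps_at_cons.
have ends : \sum_v ((x == v) || (y == v) : nat) = #|[set x; y]|.
  by rewrite -sum1_card [RHS]big_mkcond; apply: eq_bigr => v _; rewrite !inE !(eq_sym v).
by rewrite big_split ends cards2 xy IHs.
Qed.

Lemma count_odd_steps_at x s : path (fun a b => a != b) x s ->
  count odd [seq steps_at x s v | v <- enum T] <= 2.
Proof.
move=> xs; rewrite count_map.
apply: (@leq_trans (count (mem [set x; last x s]) (enum T))).
  by apply: sub_count => v /odd_steps_at-/(_ xs); rewrite !inE.
rewrite enumT -size_filter -cardE cards2.
by case: (_ != _).
Qed.

End StepsAtFinite.

Lemma sumn_sorted_same_parity (r : bool) (a : nat) (s : seq nat) : sorted ltn s ->
  all (fun y => (odd y == r) && (a <= y)) s -> a * size s + size s * (size s).-1 <= sumn s.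
Proof.
elim: s a => [|x s IHs] a; first by rewrite muln0.
move=> /= sorted_xs /andP [/andP [/eqP ox ax] s_parity].
have gap : all (fun y => (odd y == r) && (a.+2 <= y)) s.
  apply/allP => y ys; have /andP [/eqP oy _] := allP s_parity y ys.
  have xy : x < y := allP (order_path_min ltn_trans sorted_xs) y ys.
  have : y != x.+1 by apply/eqP => yx; move: oy; rewrite yx oddS ox; by case: (r).
  by rewrite oy eqxx /=; lia.
have := IHs a.+2 (path_sorted sorted_xs) gap.
by case: (size s) => [|k] /=; nia.
Qed.

Lemma sumn_uniq_same_parity (r : bool) (a : nat) (s : seq nat) : uniq s ->
  all (fun y => (odd y == r) && (a <= y)) s -> a * size s + size s * (size s).-1 <= sumn s.
Proof.
move=> s_uniq s_parity; have sort_s : perm_eq (sort leq s) s by rewrite perm_sort.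
rewrite -(perm_size sort_s) -(perm_sumn sort_s).
apply: (@sumn_sorted_same_parity r a); last by rewrite (perm_all _ sort_s).
by rewrite ltn_sorted_uniq_leq (perm_uniq sort_s) s_uniq (sort_sorted leq_total).
Qed.

Lemma sumn_uniq_two_odd (s : seq nat) : uniq s -> count odd s <= 2 -> 4 <= size s ->
  size s ^ 2 + 10 <= sumn s + 5 * size s.
Proof.
move=> s_uniq odds size_s.
have split_s : perm_eq (filter odd s ++ filter (predC odd) s) s by rewrite perm_filterC.
have evens : all (fun y => (odd y == false) && (0 <= y)) (filter (predC odd) s).
  by apply/allP => y; rewrite mem_filter => /andP [/negbTE ->].
have odds_ge1 : all (fun y => (odd y == true) && (1 <= y)) (filter odd s).
  by apply/allP => y; rewrite mem_filter => /andP [oy _]; rewrite oy; case: y oy.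
move: (sumn_uniq_same_parity (filter_uniq _ s_uniq) evens).
move: (sumn_uniq_same_parity (filter_uniq _ s_uniq) odds_ge1).
rewrite -(perm_sumn split_s) -(perm_size split_s) sumn_cat size_cat !size_filter in size_s *.
by move: odds size_s; case: (count odd s) => [|[|[|k]]] //= _; nia.
Qed.

Lemma injective_steps_at_size (T : finType) (x : T) (s : seq T) :
  4 <= #|T| -> path (fun a b => a != b) x s -> injective (steps_at x s) ->
  #|T| ^ 2 + 10 <= (size s).*2 + 5 * #|T|.
Proof.
move=> T_ge4 xs steps_inj; set degrees := [seq steps_at x s v | v <- enum T].
have size_degrees : size degrees = #|T| by rewrite size_map cardT.
have sum_degrees : sumn degrees = (size s).*2.
  by rewrite sumnE big_map big_enum sum_steps_at.
have := sumn_uniq_two_odd _ (count_odd_steps_at xs).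
by rewrite map_inj_uniq ?enum_uniq // size_degrees sum_degrees; apply.
Qed.

Lemma card_K_neighbours n (v : 'I_n) : #|[set u | K n v u]| = n.-1.
Proof.
have -> : [set u | K n v u] = [set~ v] by apply/setP => u; rewrite !inE eq_sym.
by rewrite cardsC1 card_ord.
Qed.

Lemma deg_plus_walk_K n (x : 'I_n) (s : seq 'I_n) (v : 'I_n) :
  deg_plus_walk (K n) x s v = n.-1 + steps_at x s v.
Proof. by rewrite /deg_plus_walk card_K_neighbours. Qed.

Lemma irregularising_K n (x : 'I_n) (s : seq 'I_n) :
  irregularising (K n) x s <-> path (K n) x s /\ injective (steps_at x s).
Proof.
split=> [] [xs irr]; split=> // u v.
- move=> steps_uv; apply/eqP/negPn/negP => uv.
  by apply: (irr u v uv); rewrite !deg_plus_walk_K steps_uv.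
- by move=> uv; rewrite !deg_plus_walk_K => /addnI /irr /eqP; rewrite (negbTE uv).
Qed.

Lemma irregularising_K_size n (x : 'I_n) (s : seq 'I_n) :
  4 <= n -> irregularising (K n) x s -> (n ^ 2 + 10 - 5 * n) %/ 2 <= size s.
Proof.
move=> n_ge4 /irregularising_K [xs steps_inj].
have := injective_steps_at_size (x := x) _ xs steps_inj; rewrite card_ord => /(_ n_ge4).
rewrite divn2 -[size s]doubleK => bound; apply: half_leq; lia.
Qed.

Lemma irregularising_map_inord k (y : nat) (S : seq nat) :
  all (fun w => w <= k) (y :: S) -> path (fun a b => a != b) y S ->
  {in [pred w | w <= k] &, injective (steps_at y S)} ->
  irregularising (K k.+1) (inord y) (map inord S).
Proof.
have inordE w (v : 'I_k.+1) : w <= k -> (inord w == v) = (w == v).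
  by move=> wk; rewrite -val_eqE /= inordK.
move=> bounded yS steps_inj; apply/irregularising_K; split.
  elim: S y bounded yS {steps_inj} => //= z S IHS y /and3P [yk zk Sk] /andP [yz zS].
  by rewrite /K inordE // inordK // yz IHS //= zk.
have steps_map (v : 'I_k.+1) : steps_at (inord y) (map inord S) v = steps_at y S v.
  elim: S y bounded {yS steps_inj} => //= z S IHS y /and3P [yk zk Sk].
  by rewrite !steps_at_cons !inordE // IHS //= zk.
by move=> u v; rewrite !steps_map => /steps_inj uv; apply/val_inj/uv; rewrite inE -ltnS.
Qed.

Fixpoint countdown (a k : nat) : seq nat :=
  if k is k'.+1 then (a + k) :: countdown a k' else [:: a].

Fixpoint stairs (a k : nat) : seq nat :=
  if k is k'.+1 then countdown a k ++ stairs a.+1 k' else [:: a].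

Lemma count_mem_countdown a k w : count_mem w (countdown a k) = (a <= w <= a + k).
Proof. by elim: k => [|k IHk] /=; rewrite ?IHk; lia. Qed.

Lemma last_countdown a k y : last y (countdown a k) = a.
Proof. by elim: k y => [|k IHk] y //=. Qed.

Lemma path_countdown a k y : y != a + k -> path (fun u v => u != v) y (countdown a k).
Proof. by elim: k y => [|k IHk] y /=; [rewrite addn0 => -> | move=> -> /=; apply: IHk; lia]. Qed.

Lemma size_countdown a k : size (countdown a k) = k.+1.
Proof. by elim: k => //= k ->. Qed.

Lemma size_stairs a k : (size (stairs a k)).*2 = k.+1 * k.+2.
Proof.
elim: k a => [|k IHk] a //=.
by rewrite size_cat size_countdown; have := IHk a.+1; lia.
Qed.

Lemma count_mem_stairs a k w : count_mem w (stairs a k) = (w <= a + k) * (w.+1 - a).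
Proof.
elim: k a => [|k IHk] a /=; first by rewrite addn0; lia.
by rewrite count_cat count_mem_countdown IHk; lia.
Qed.

Lemma mem_stairs a k w : w \in stairs a k -> w <= a + k.
Proof.
apply: contraTT; rewrite -ltnNge => w_big.
by apply/count_memPn; rewrite count_mem_stairs; lia.
Qed.

Lemma last_stairs a k y : last y (stairs a k) = a + k.
Proof.
elim: k a y => [|k IHk] a y /=; first by rewrite addn0.
by rewrite last_cat IHk addSnnS.
Qed.

Lemma path_stairs a k y : y != a + k -> path (fun u v => u != v) y (stairs a k).
Proof.
elim: k a y => [|k IHk] a y; first by rewrite /= addn0 andbT.
move=> y_top; rewrite cat_path path_countdown // last_countdown.
by case: k IHk y_top => [|k] IHk y_top; [rewrite /= andbT | apply: IHk]; lia.
Qed.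

Definition tour (n : nat) : seq nat := 2 :: stairs 3 (n - 4) ++ [:: 2].

Definition tour_steps (w : nat) : nat := (w - 2).*2 + 3 * (w == 2) + (w == 1).

Lemma tour_steps_inj : injective tour_steps.
Proof. by rewrite /tour_steps => [[|[|[|u]]] [|[|[|v]]]] /=; lia. Qed.

Lemma path_tour n : 4 <= n -> path (fun u v => u != v) 1 (tour n).
Proof.
move=> n_ge4; rewrite /= cat_path path_stairs /= ?last_stairs; lia.
Qed.

Lemma size_tour n : 4 <= n -> (size (tour n)).*2 = n ^ 2 + 10 - 5 * n.
Proof.
move=> n_ge4; have := size_stairs 3 (n - 4); rewrite /= size_cat /=; nia.
Qed.

Lemma last_tour n y : last y (tour n) = 2.
Proof. by rewrite /= last_cat. Qed.

Lemma count_mem_tour n w : 4 <= n -> w < n -> count_mem w (tour n) = (w == 2).*2 + (w - 2).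
Proof. by move=> n_ge4 w_lt_n; rewrite /= count_cat count_mem_stairs /=; case: eqP; lia. Qed.

Lemma steps_at_tour n w : 4 <= n -> w < n -> steps_at 1 (tour n) w = tour_steps w.
Proof.
move=> n_ge4 w_lt_n; have := steps_at_last w (path_tour n_ge4).
rewrite last_tour count_mem_tour // /tour_steps.
by case: w w_lt_n => [|[|[|w]]] /=; lia.
Qed.

Lemma irregularising_tour n : 3 <= n ->
  irregularising (K n.+1) (inord 1) (map inord (tour n.+1)).
Proof.
move=> n_ge3; apply: irregularising_map_inord.
- apply/allP => w; rewrite !inE mem_cat inE.
  by case/or4P => [/eqP-> | /eqP-> | /mem_stairs | /eqP->]; lia.
- exact: path_tour.
- by move=> u v u_le v_le; rewrite !steps_at_tour // => /tour_steps_inj.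
Qed.

Lemma irregularising_K3_witness : irregularising (K 3) (inord 0) (map inord [:: 1; 2; 1]).
Proof. by apply: irregularising_map_inord => // [[|[|[|u]]]] [|[|[|v]]]. Qed.

Lemma irregularising_K3_size (x : 'I_3) (s : seq 'I_3) :
  irregularising (K 3) x s -> 3 <= size s.
Proof.
move=> /irregularising_K [xs steps_inj]; rewrite leqNgt; apply/negP => short.
case: s short xs steps_inj => [|a [|b [|c s]]] //= _.
- by move=> _ /(_ ord0 ord_max erefl).
- rewrite andbT => xa /(_ x a); rewrite /steps_at /= !eqxx orbT => /(_ erefl) xa_eq.
  by move: xa; rewrite xa_eq /K eqxx.
- move=> /and3P [xa ab _]; case: (eqVneq b x) => [bx | xb].
    move=> /(_ x a); rewrite /steps_at /= bx !eqxx !orbT => /(_ erefl) xa_eq.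
    by move: xa; rewrite xa_eq /K eqxx.
  move=> /(_ x b); rewrite /steps_at /= !eqxx !orbT /= (eq_sym a x) (negbTE xa).
  rewrite (negbTE xb) (eq_sym x b) (negbTE xb) (negbTE ab) => /(_ erefl) xb_eq.
  by rewrite xb_eq eqxx in xb.
Qed.

Theorem theorem5p1 :
  MLW_is (K 3) 3 /\
  (forall n : nat, 4 <= n -> MLW_is (K n) ((n ^ 2 + 10 - 5 * n) %/ 2)).
Proof.
split.
  split; last exact: irregularising_K3_size.
  by exists (inord 0), (map inord [:: 1; 2; 1]); split; first exact: irregularising_K3_witness.
move=> [//|n] n_ge4; split; last by move=> x s; apply: irregularising_K_size.
exists (inord 1), (map inord (tour n.+1)); split; first exact: irregularising_tour.
by rewrite size_map -(size_tour n_ge4) divn2 doubleK.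
Qed.
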